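(* Let $p$ be a real homogeneous polynomial of degree $N$ on $\mathbb{R}^n$ with all coefficients $\ge0$, $p(1,\dots,1)=1$, and $\frac{\partial p}{\partial x_1}(e)=\cdots=\frac{\partial p}{\partial x_n}(e)=k>0$ where $e=(1,\dots,1)$ ($p$ need not be symmetric). Then for every positive definite $A=(a_{ij})\in\mathrm{Sym}^2(\mathbb{R}^n)$: (i) $p(a_{11},a_{22},\dots,a_{nn})^{1/N}\ge(\det A)^{1/n}$; (ii) $p(\lambda_1(A),\dots,\lambda_n(A))^{1/N}\ge(\det A)^{1/n}$, where $\lambda_1(A)\le\lambda_2(A)\le\cdots\le\lambda_n(A)$ are the eigenvalues of $A$ in increasing order.
   Context: $\mathrm{Sym}^2(\mathbb{R}^n)$ is the space of real symmetric $n\times n$ matrices. *)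

From mathcomp Require Import all_boot all_algebra.
From mathcomp Require Import mpoly.
From mathcomp Require Import reals exp.
Set Implicit Arguments.
Unset Strict Implicit.
Unset Printing Implicit Defensive.
Import GRing.Theory Num.Theory.
Local Open Scope ring_scope.

Definition symmetricmx (R : realType) (n : nat) (A : 'M[R]_n) : Prop :=
  A^T = A.

Definition posdefmx (R : realType) (n : nat) (A : 'M[R]_n) : Prop :=
  symmetricmx A /\ forall x : 'cV[R]_n, x != 0 -> 0 < (x^T *m A *m x) ord0 ord0.

Definition sorted_eigenvalues (R : realType) (n : nat) (A : 'M[R]_n)
    (lam : 'I_n -> R) : Prop :=
  (forall i j : 'I_n, (i <= j)%N -> lam i <= lam j) /\
  char_poly A = \prod_(i < n) ('X - (lam i)%:P).

Definition onesv (R : realType) (n : nat) : 'I_n -> R := fun _ => 1.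

(* Euler's identity at e = (1,...,1) gives n k = N, and the coefficients of p,
   summing to p(e) = 1, are weights for a weighted AM-GM inequality over the
   monomials of p; it yields p(x) >= (x_1 ... x_n)^k, i.e.
   p(x)^(1/N) >= (x_1 ... x_n)^(1/n), for all positive x.  For (i) take x the
   diagonal of A and use Hadamard's inequality det A <= a_11 ... a_nn, proved
   by induction through the Schur complement of a_11; for (ii) take x the
   eigenvalues, whose product is det A. *)

From Pilot Require Import Defs.
From mathcomp Require Import all_boot all_algebra.
From mathcomp Require Import mpoly.
From mathcomp Require Import order reals exp.
Import Order.TTheory GRing.Theory Num.Theory.
Local Open Scope ring_scope.

Lemma psumr_wmul_gt0 {R : realDomainType} {I : eqType} (r : seq I)
    (c y : I -> R) :
  (forall i, 0 <= c i) -> (forall i, 0 < y i) -> 0 < \sum_(i <- r) c i ->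
  0 < \sum_(i <- r) c i * y i.
Proof.
move=> c_ge0 y_gt0.
have cy_ge0 i : 0 <= c i * y i by rewrite mulr_ge0 // ltW.
rewrite !lt_def !sumr_ge0 // !andbT !psumr_neq0 //.
by apply: sub_has => i /=; rewrite pmulr_lgt0.
Qed.

Lemma ln_prod {R : realType} {I : Type} (r : seq I) (F : I -> R) :
  (forall i, 0 < F i) -> ln (\prod_(i <- r) F i) = \sum_(i <- r) ln (F i).
Proof.
move=> F_gt0; elim: r => [|a r IHr]; first by rewrite !big_nil ln1.
by rewrite !big_cons lnM ?posrE ?IHr // prodr_gt0.
Qed.

(* Jensen's inequality for the concave function ln, from the tangent bound
   [ln t <= t - 1] at [t = y i / S]. *)
Lemma ln_wsum_ge {R : realType} {I : eqType} (r : seq I) {c y : I -> R} :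
  (forall i, 0 <= c i) -> (forall i, 0 < y i) -> \sum_(i <- r) c i = 1 ->
  \sum_(i <- r) c i * ln (y i) <= ln (\sum_(i <- r) c i * y i).
Proof.
move=> c_ge0 y_gt0 c_sum1; set S := \sum_(i <- r) c i * y i.
have S_gt0 : 0 < S by rewrite psumr_wmul_gt0 // c_sum1.
have tangent i : ln (y i) <= ln S + (y i / S - 1).
  have yS_gt0 : 0 < y i / S by rewrite divr_gt0.
  rewrite -{1}(divfK (lt0r_neq0 S_gt0) (y i)) lnM ?posrE //.
  rewrite [ln S + _]addrC lerD2r lerBrDl.
  by have := expR_ge1Dx (ln (y i / S)); rewrite lnK ?posrE.
have centred : \sum_(i <- r) c i * (y i / S - 1) = 0.
  under eq_bigr do rewrite mulrBr mulr1 mulrA.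
  by rewrite sumrB -mulr_suml -/S divff ?lt0r_neq0 // c_sum1 subrr.
apply: le_trans (ler_sum _ (fun i _ => ler_wpM2l (c_ge0 i) (tangent i))) _.
under eq_bigr do rewrite mulrDr.
by rewrite big_split /= -mulr_suml c_sum1 mul1r centred addr0.
Qed.

Lemma ler_powR_ln {R : realType} (a b s t : R) : 0 < a -> 0 < b ->
  (powR a s <= powR b t) = (s * ln a <= t * ln b).
Proof. by move=> a_gt0 b_gt0; rewrite /powR !gt_eqF // ler_expR. Qed.

Section MonomialSums.
Context {R : realType} {n : nat} (p : {mpoly R[n]}).

Lemma meval_onesv : p.@[@onesv R n] = \sum_(m <- msupp p) p@_m.
Proof.
rewrite mevalE; apply: eq_bigr => m _.
by rewrite big1 ?mulr1 // => i _; rewrite expr1n.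
Qed.

Lemma mderiv_meval_onesv (i : 'I_n) :
  (p^`M(i)).@[@onesv R n] = \sum_(m <- msupp p) p@_m * (m i)%:R.
Proof.
rewrite {1}(mpolyE p) (big_morph _ (@mderivD _ _ i) (@mderiv0 _ _ i)).
rewrite (big_morph _ (mevalD _) (meval0 _)).
apply: eq_bigr => m _; rewrite mderivZ mderivX !mevalZ mevalX.
by rewrite big1 ?mulr1 // => j _; rewrite expr1n.
Qed.

Lemma homog_sum_mderiv_onesv {N : nat} : p \is N.-homog ->
  \sum_i (p^`M(i)).@[@onesv R n] = N%:R * p.@[@onesv R n].
Proof.
move=> p_homog; under eq_bigr do rewrite mderiv_meval_onesv.
rewrite exchange_big meval_onesv mulr_sumr /=; apply: eq_big_seq => m m_supp.
by rewrite -mulr_sumr -natr_sum -mdegE (dhomog_mf p_homog m_supp) mulrC.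
Qed.

End MonomialSums.

Lemma meval_gt0 {R : realType} {n : nat} (p : {mpoly R[n]}) (x : 'I_n -> R) :
  (forall m, 0 <= p@_m) -> 0 < p.@[@onesv R n] -> (forall i, 0 < x i) ->
  0 < p.@[x].
Proof.
move=> p_ge0 p1_gt0 x_gt0; rewrite mevalE psumr_wmul_gt0 -?meval_onesv // => m.
by rewrite prodr_gt0 // => i _; rewrite exprn_gt0.
Qed.

(* Weighted AM-GM over the monomials of [p], with weights [p@_m]; the partial
   derivatives at [e] collect the resulting exponents of each [x i]. *)
Lemma ln_meval_ge {R : realType} {n : nat} {p : {mpoly R[n]}} (x : 'I_n -> R) :
  (forall m, 0 <= p@_m) -> p.@[@onesv R n] = 1 -> (forall i, 0 < x i) ->
  \sum_i (p^`M(i)).@[@onesv R n] * ln (x i) <= ln p.@[x].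
Proof.
move=> p_ge0 p1 x_gt0; rewrite mevalE.
have xm_gt0 (m : 'X_{1..n}) : 0 < \prod_i x i ^+ m i.
  by rewrite prodr_gt0 // => i _; rewrite exprn_gt0.
have := ln_wsum_ge (msupp p) p_ge0 xm_gt0.
rewrite -meval_onesv p1 => /(_ erefl); apply: le_trans.
under eq_bigr do rewrite mderiv_meval_onesv mulr_suml.
rewrite exchange_big /=; apply: ler_sum => m _.
rewrite ln_prod => [|i]; last by rewrite exprn_gt0.
rewrite mulr_sumr; apply: ler_sum => i _.
by rewrite lnXn // -mulrA mulr_natl.
Qed.

Lemma powR_le_meval {R : realType} {n N : nat} {p : {mpoly R[n]}} {k : R}
    {x : 'I_n -> R} {D : R} :
  p \is N.-homog -> (forall m, 0 <= p@_m) -> p.@[@onesv R n] = 1 -> 0 < k ->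
  (forall i : 'I_n, (p^`M(i)).@[@onesv R n] = k) ->
  (forall i, 0 < x i) -> 0 < D -> D <= \prod_i x i ->
  powR D (n%:R^-1) <= powR p.@[x] (N%:R^-1).
Proof.
move=> p_homog p_ge0 p1 k_gt0 p'1 x_gt0 D_gt0 D_le.
have nk_N : n%:R * k = N%:R.
  have := homog_sum_mderiv_onesv p p_homog.
  rewrite p1 mulr1 (eq_bigr _ (fun i _ => p'1 i)).
  by rewrite sumr_const card_ord mulr_natl.
have [n0|n_gt0] := posnP n.
  have n0R : n%:R = 0 :> R by rewrite n0.
  by move: nk_N; rewrite n0R mul0r => <-; rewrite invr0 !powRr0.
have px_gt0 : 0 < p.@[x] by rewrite meval_gt0 // p1 ltr01.
have ln_D : k * ln D <= ln p.@[x].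
  apply: le_trans (ln_meval_ge x p_ge0 p1 x_gt0).
  under eq_bigr do rewrite p'1.
  rewrite -mulr_sumr ler_pM2l //.
  by rewrite -ln_prod // ler_ln ?posrE // prodr_gt0.
rewrite ler_powR_ln // -nk_N invfM -mulrA ler_pM2l ?invr_gt0 ?ltr0n //.
by rewrite ler_pdivlMl.
Qed.

Lemma posdefmx_diag_gt0 {R : realType} {n : nat} {A : 'M[R]_n} (i : 'I_n) :
  posdefmx A -> 0 < A i i.
Proof.
move=> [_ A_pos]; have ei_neq0 : (delta_mx i 0 : 'cV[R]_n) != 0.
  by apply/eqP => /matrixP/(_ i 0)/eqP; rewrite !mxE !eqxx oner_eq0.
by have := A_pos _ ei_neq0; rewrite trmx_delta -rowE -colE !mxE.
Qed.

Definition schur1 {R : fieldType} {n : nat} (A : 'M[R]_(1 + n)) : 'M[R]_n :=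
  drsubmx A - (A 0 0)^-1 *: (dlsubmx A *m ursubmx A).

Lemma ulsubmx_scalar {R : fieldType} {n : nat} (A : 'M[R]_(1 + n)) :
  ulsubmx A = (A 0 0)%:M.
Proof. by rewrite [LHS]mx11_scalar !mxE lshift0. Qed.

Lemma det_schur1 {R : fieldType} {n : nat} {A : 'M[R]_(1 + n)} :
  A 0 0 != 0 -> \det A = A 0 0 * \det (schur1 A).
Proof.
move=> a_neq0.
pose L : 'M[R]_(1 + n) := block_mx 1 0 (- (A 0 0)^-1 *: dlsubmx A) 1.
have LA : L *m A = block_mx (A 0 0)%:M (ursubmx A) 0 (schur1 A).
  rewrite -[A in L *m A]submxK ulsubmx_scalar mulmx_block.
  rewrite !mul1mx !mul0mx !addr0.
  rewrite -!scalemxAl mul_mx_scalar scalerA mulNr mulVf // scaleN1r addNr.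
  by rewrite /schur1 addrC scaleNr.
have := congr1 determinant LA.
rewrite det_mulmx det_lblock !det1 !mul1r => ->.
by rewrite det_ublock det_scalar1.
Qed.

Section SchurComplement.
Context {R : realType} {n : nat} {A : 'M[R]_(1 + n)}.
Hypothesis A_posdef : posdefmx A.

Let a_gt0 : 0 < A 0 0. Proof. exact: posdefmx_diag_gt0. Qed.

Let dlsubmx_tr : dlsubmx A = (ursubmx A)^T.
Proof. by rewrite trmx_ursub (proj1 A_posdef). Qed.

(* The quadratic form of [schur1 A] at [x] is that of [A] at the vector
   [(- a^-1 b x, x)], whose first coordinate cancels the off-diagonal block. *)
Lemma posdefmx_schur1 : posdefmx (schur1 A).
Proof.
have [A_sym A_pos] := A_posdef; split.
  rewrite /Defs.symmetricmx /schur1 linearB linearZ /=.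
  rewrite trmx_mul trmx_drsub A_sym.
  by rewrite dlsubmx_tr trmxK.
move=> x x_neq0; pose u : 'cV[R]_1 := - (A 0 0)^-1 *: (ursubmx A *m x).
have y_neq0 : col_mx u x != 0.
  by apply: contraNneq x_neq0 => y0; rewrite -(col_mxKd u x) y0 linear0.
have := A_pos _ y_neq0; rewrite -[A in _ *m A *m _]submxK ulsubmx_scalar.
rewrite tr_col_mx -mulmxA mul_block_col mul_row_col mul_scalar_mx scalerA.
rewrite mulrN mulfV ?lt0r_neq0 // scaleN1r addNr mulmx0 add0r -mulmxA.
congr (0 < (_ *m _) _ _); rewrite /schur1 mulmxBl -scalemxAl -mulmxA.
by rewrite /u -scalemxAr scaleNr addrC.
Qed.

Lemma schur1_diag_le (i : 'I_n) : schur1 A i i <= drsubmx A i i.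
Proof.
rewrite !mxE gerBl; apply: mulr_ge0; first by rewrite invr_ge0 ltW.
by rewrite big_ord1 dlsubmx_tr mxE -expr2 sqr_ge0.
Qed.

End SchurComplement.

Lemma posdefmx_det_gt0 {R : realType} {n : nat} {A : 'M[R]_n} :
  posdefmx A -> 0 < \det A.
Proof.
elim: n A => [|n IHn] A A_posdef; first by rewrite det_mx00.
have a_gt0 : 0 < A 0 0 by exact: posdefmx_diag_gt0.
rewrite (det_schur1 (lt0r_neq0 a_gt0)) mulr_gt0 // IHn //.
exact: posdefmx_schur1.
Qed.

Lemma hadamard_posdefmx {R : realType} {n : nat} {A : 'M[R]_n} :
  posdefmx A -> \det A <= \prod_i A i i.
Proof.
elim: n A => [|n IHn] A A_posdef; first by rewrite det_mx00 big_ord0.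
have a_gt0 : 0 < A 0 0 by exact: posdefmx_diag_gt0.
have S_posdef := posdefmx_schur1 A_posdef.
rewrite (det_schur1 (lt0r_neq0 a_gt0)) big_ord_recl ler_pM2l //.
apply: le_trans (IHn _ S_posdef) _; apply: ler_prod => i _.
rewrite (ltW (posdefmx_diag_gt0 i S_posdef)) /=.
apply: le_trans (schur1_diag_le A_posdef i) _.
by rewrite !mxE !rshift1.
Qed.

Lemma det_char_poly_roots {R : comNzRingType} {n : nat} {A : 'M[R]_n}
    {lam : 'I_n -> R} :
  char_poly A = \prod_i ('X - (lam i)%:P) -> \det A = \prod_i lam i.
Proof.
move=> chA; have := char_poly_det A.
rewrite -horner_coef0 chA horner_prod.
under eq_bigr do rewrite hornerXsubC sub0r.
by rewrite prodrN card_ord => /lreg_sign.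
Qed.

Lemma posdefmx_eigenvalue_gt0 {R : realType} {n : nat} {A : 'M[R]_n} {a : R} :
  posdefmx A -> eigenvalue A a -> 0 < a.
Proof.
move=> [_ A_pos] /eigenvalueP [v vA v_neq0].
have vT_neq0 : v^T != 0 by rewrite trmx_eq0.
have := A_pos _ vT_neq0; rewrite trmxK vA -scalemxAl mxE.
have vv_ge0 : 0 <= (v *m v^T) 0 0.
  by rewrite mxE sumr_ge0 // => j _; rewrite mxE -expr2 sqr_ge0.
move=> avv_gt0; have vv_gt0 : 0 < (v *m v^T) 0 0.
  rewrite lt_def vv_ge0 andbT.
  by apply: contraTneq avv_gt0 => ->; rewrite mulr0 ltxx.
by rewrite -(pmulr_lgt0 _ vv_gt0).
Qed.

Lemma eigenvalue_char_poly_roots {R : fieldType} {n : nat} {A : 'M[R]_n}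
    {lam : 'I_n -> R} (i : 'I_n) :
  char_poly A = \prod_i ('X - (lam i)%:P) -> eigenvalue A (lam i).
Proof.
move=> chA; rewrite eigenvalue_root_char chA /root horner_prod (bigD1 i) //=.
by rewrite hornerXsubC subrr mul0r.
Qed.

Theorem mainTheorem13 (R : realType) (n N : nat) (p : {mpoly R[n]}) (k : R) :
  p \is N.-homog ->
  (forall m, 0 <= p@_m) ->
  p.@[@onesv R n] = 1 ->
  0 < k ->
  (forall i : 'I_n, (p^`M(i)).@[@onesv R n] = k) ->
  forall A : 'M[R]_n, posdefmx A ->
    powR (p.@[fun i => A i i]) (N%:R^-1) >= powR (\det A) (n%:R^-1)
    /\ (forall lam : 'I_n -> R, sorted_eigenvalues A lam ->
          powR (p.@[lam]) (N%:R^-1) >= powR (\det A) (n%:R^-1)).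
Proof.
move=> p_homog p_ge0 p1 k_gt0 p'1 A A_posdef.
have det_gt0 := posdefmx_det_gt0 A_posdef.
split=> [|lam [_ chA]]; apply: (powR_le_meval p_homog p_ge0 p1 k_gt0 p'1).
- by move=> i; apply: posdefmx_diag_gt0.
- exact: det_gt0.
- exact: hadamard_posdefmx.
- move=> i; apply: (posdefmx_eigenvalue_gt0 A_posdef).
  exact: eigenvalue_char_poly_roots.
- exact: det_gt0.
- by rewrite (det_char_poly_roots chA).
Qed.
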